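(* For every integer $m\ge0$, the polynomial $(-1)^m\,m!\,v_m(Y)\in R[Y]$ is $(bm+1)$-triangular (with respect to $U$) of degree $(ab-1)m+a$.
   Context: Let $a,b\ge2$ be integers and $u_0,\ldots,u_a$ variables; let $R=\mathbb{C}[u_0,\ldots,u_{a-1}][u_a,u_a^{-1}]$ and $U(Y)=\sum_{j=0}^au_jY^j\in R[Y]$. Let $I(Y,Z)\in R[[Z]][Y]$ be the formal inverse of $Y+ZU(Y)^b$, i.e. the unique element with $I(Y+ZU(Y)^b,Z)=Y$, and define $v_k(Y)\in R[Y]$ by $U(I(Y,Z))=\sum_{k\ge0}v_k(Y)Z^k$. $\mathbb{Q}_+$ denotes the positive rationals. For an integer $m\ge1$, a polynomial $P(Y)=\sum_{l=0}^dp_lY^l\in R[Y]$ of degree $d\ge a$ is called $m$-triangular (or $(m,U)$-triangular) if for every $l$ with $d-a\le l\le d$ one has $p_l=q_lu_a^{m-1}u_{a-d+l}+P_l(u_{a-d+l+1},\ldots,u_a)$ for some $q_l\in\mathbb{Q}_+$ and some polynomial $P_l\in\mathbb{C}[u_{a-d+l+1},\ldots,u_a]$ (for $l=d$ this means $p_d=q_du_a^m$). *)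

From HB Require Import structures.
From mathcomp Require Import all_boot all_order all_algebra.
From mathcomp Require Import reals complex mpoly.
Set Implicit Arguments. Unset Strict Implicit. Unset Printing Implicit Defensive.
Import GRing.Theory.
Local Open Scope ring_scope.

Section Defs.
Variables (Rr : realType) (a : nat).

Definition Cc : numClosedFieldType := Rr[i].

Definition Pol : idomainType := {mpoly Cc[a.+1]}.

(* Ambient field Frac(C[u_0..u_a]), in which R = C[u_0..u_{a-1}][u_a, u_a^-1]
   sits as the subring [inR] below. *)
Definition K : fieldType := {fraction Pol}.

Definition u (j : nat) : K := tofrac ('X_(inord j) : Pol).

Definition inR (x : K) : Prop :=
  exists (k : nat) (p : Pol), x = tofrac p / u a ^+ k.

Definition Upoly : {poly K} := \poly_(j < a.+1) u j.

(* Elements of R[Y][[Z]] are sequences (I_k)_k of polynomials in Y: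
   I(Y,Z) = sum_k I_k(Y) Z^k.  Finite truncations in Z are represented in
   {poly {poly K}}: the outer variable is Z, the inner one is Y. *)
Definition cst2 (c : K) : {poly {poly K}} := c%:P%:P.

(* p(Y + Z W(Y)) as a polynomial in Z with coefficients in K[Y]. *)
Definition substYZ (p W : {poly K}) : {poly {poly K}} :=
  (map_poly cst2 p).[('X : {poly K})%:P + W%:P * 'X].

(* I(Y + Z U(Y)^b, Z) = Y, coefficientwise in Z: the coefficient of Z^n of
   sum_k I_k(Y + Z U(Y)^b) Z^k only involves k <= n. *)
Definition is_formal_inverse (b : nat) (I : nat -> {poly K}) : Prop :=
  forall n : nat,
    (\sum_(k < n.+1) substYZ (I k) (Upoly ^+ b) * 'X^k)`_n
      = (if n == 0%N then 'X else 0).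

(* v_k(Y) = coefficient of Z^k in U(I(Y,Z)); it only depends on I_0..I_k. *)
Definition vcoef (I : nat -> {poly K}) (k : nat) : {poly K} :=
  ((map_poly cst2 Upoly).[\sum_(i < k.+1) (I i)%:P * 'X^i])`_k.

(* Index:
   a - d + l is written (a - (d - l))%N, which is correct for d-a <= l <= d.
   P_l in C[u_{a-d+l+1},...,u_a] means: no monomial of P_l involves u_i with
   i <= a-d+l.  For l = d the paper requires p_d = q_d u_a^M, i.e. P_d = 0. *)
Definition triangular (M d : nat) (P : {poly K}) : Prop :=
  (forall i, inR P`_i) /\ size P = d.+1 /\ (a <= d)%N /\
  forall l : nat, (d - a <= l <= d)%N ->
    exists q : rat, 0 < q /\
    exists Q : Pol,
      (forall mon, mon \in msupp Q ->
         forall i : 'I_a.+1, (i <= a - (d - l))%N -> mon i = 0%N) /\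
      (l = d -> Q = 0) /\
      P`_l = ratr q * u a ^+ M.-1 * u (a - (d - l)) + tofrac Q.

End Defs.

(* Let X = I(Y, Z). Differentiating X + Z W(X) = Y (with W = U^b) in Y and in Z gives
   the Lagrange equation dX/dZ = -W(X) dX/dY, so every f(X) satisfies
   d f(X)/dZ = -W(X) d f(X)/dY and, inductively,
   d^m f(X)/dZ^m = d^(m-1)/dY^(m-1) ((-W(X))^m d f(X)/dY).
   At Z = 0, where X = Y, this is Lagrange inversion:
   (bm+1) (-1)^m m! v_m = d^m/dY^m U^(bm+1).  Everything is computed on truncations
   of X modulo powers of Z.
   The coefficient of Y^(aN-k), 0 < k <= a, in U^N is N u_a^(N-1) u_(a-k) plus a
   polynomial in u_(a-k+1), ..., u_a, and differentiating m times only multiplies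
   coefficients by positive integers; this is the triangular shape. *)

From mathcomp Require Import all_boot all_order all_algebra.
From mathcomp Require Import reals complex mpoly.
From mathcomp Require Import ring zify.
Set Implicit Arguments. Unset Strict Implicit. Unset Printing Implicit Defensive.
Import GRing.Theory Num.Theory.
Local Open Scope ring_scope.

Lemma take_poly1 (R : nzSemiRingType) (p : {poly R}) : take_poly 1 p = (p`_0)%:P.
Proof. by apply/polyP => i; rewrite coef_take_poly coefC; case: i. Qed.

Section SeriesInY.
Variable R : comRingType.

(* [T] is R[Y][Z]: its variable ['X] is Z and ['X%:P] is Y. [compY X f] is
   f(X), [derivY] is d/dY, [substY Phi] substitutes Phi for Y, and
   [eqmodZ n] is congruence modulo Z^n. *)
Local Notation T := {poly {poly R}}.

Definition compY (X : T) : {rmorphism {poly R} -> T} := comp_poly X \o map_poly polyC.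
Definition derivY : {additive T -> T} := map_poly (@deriv R).
Definition substY (Phi : T) : {rmorphism T -> T} := horner_eval ('X : T) \o map_poly (compY Phi).
Definition eqmodZ n (p q : T) := take_poly n p = take_poly n q.

Lemma compYE X f : compY X f = (map_poly (fun c => c%:P%:P) f).[X].
Proof. by rewrite /compY /= /comp_poly -map_poly_comp. Qed.

Lemma compYC X c : compY X c%:P = c%:P%:P.
Proof. by rewrite /compY /= map_polyC comp_polyC. Qed.

Lemma compYX X : compY X 'X = X.
Proof. by rewrite /compY /= map_polyX comp_polyX. Qed.

Lemma compY_Y f : compY 'X%:P f = f%:P.
Proof. by rewrite /compY /= comp_polyCr; congr polyC; exact: comp_polyXr. Qed.

Lemma coef0_compY X f : (compY X f)`_0 = f \Po X`_0.
Proof.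
rewrite /compY /= /comp_poly -[_`_0]/(coefp 0 _) -horner_map /= -map_poly_comp.
congr (_.[_]); apply/polyP => i.
by rewrite !coef_map_id0 //= ?coefC // -map_poly_comp coef_map_id0 // coef0.
Qed.

Lemma deriv_compY X f : (compY X f)^`() = compY X f^`() * X^`().
Proof. by rewrite /compY /= deriv_comp deriv_map. Qed.

Lemma coef_derivY p i : (derivY p)`_i = (p`_i)^`().
Proof. by rewrite /derivY /= coef_map_id0 // deriv0. Qed.

Lemma derivYM p q : derivY (p * q) = derivY p * q + p * derivY q.
Proof.
apply/polyP=> i; rewrite coef_derivY coefD !coefM raddf_sum -big_split /=.
by apply: eq_bigr => j _; rewrite derivM !coef_derivY.
Qed.

Lemma derivYC (c : {poly R}) : derivY c%:P = (c^`())%:P.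
Proof. by rewrite /derivY /= map_polyC. Qed.

Lemma derivYX : derivY 'X = 0.
Proof.
apply/polyP=> i; rewrite coef_derivY coefX coef0.
by case: eqP; rewrite ?derivC ?deriv0.
Qed.

Lemma derivY_exp p k : derivY (p ^+ k.+1) = derivY p * p ^+ k *+ k.+1.
Proof.
elim: k => [|k IH]; first by rewrite expr1 expr0 mulr1.
by rewrite exprS derivYM IH mulrnAr mulrCA -exprS [RHS]mulrS.
Qed.

Lemma derivY_compY X f : derivY (compY X f) = compY X f^`() * derivY X.
Proof.
elim/poly_ind: f => [|f c IH]; first by rewrite deriv0 !raddf0 mul0r.
rewrite derivMXaddC !rmorphD !rmorphM compYX !compYC.
rewrite raddfD derivYM IH derivYC derivC.
by rewrite polyC0 addr0 mulrDl addrC mulrAC.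
Qed.

Lemma deriv_derivY p : (derivY p)^`() = derivY p^`().
Proof. by apply/polyP=> i; rewrite coef_deriv !coef_derivY coef_deriv derivMn. Qed.

Lemma deriv_iter_derivY k p : (iter k derivY p)^`() = iter k derivY p^`().
Proof. by elim: k => [|k IH] //; rewrite !iterS deriv_derivY IH. Qed.

Lemma coef0_iter_derivY k p : (iter k derivY p)`_0 = (p`_0)^`(k).
Proof. by elim: k => [|k IH] //; rewrite iterS coef_derivY IH derivnS. Qed.

Lemma eqmodZP n p q : eqmodZ n p q <-> forall i, (i < n)%N -> p`_i = q`_i.
Proof.
split=> [h i hi | h].
  by have := congr1 (fun r : T => r`_i) h; rewrite /= !coef_take_poly hi.
by apply/polyP => i; rewrite !coef_take_poly; case: ifP => // /h.
Qed.

Lemma eqmodZ_refl n p : eqmodZ n p p.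
Proof. by []. Qed.

Lemma eqmodZ_trans n p q r : eqmodZ n p q -> eqmodZ n q r -> eqmodZ n p r.
Proof. exact: etrans. Qed.

Lemma eqmodZ_leq m n p q : (m <= n)%N -> eqmodZ n p q -> eqmodZ m p q.
Proof. by move=> le_mn /eqmodZP h; apply/eqmodZP => i hi; rewrite h ?(leq_trans hi). Qed.

Lemma eqmodZD n p q p' q' : eqmodZ n p q -> eqmodZ n p' q' -> eqmodZ n (p + p') (q + q').
Proof. by rewrite /eqmodZ !take_polyD => -> ->. Qed.

Lemma eqmodZB n p q p' q' : eqmodZ n p q -> eqmodZ n p' q' -> eqmodZ n (p - p') (q - q').
Proof. by move=> /eqmodZP h1 /eqmodZP h2; apply/eqmodZP => i hi; rewrite !coefB h1 ?h2. Qed.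

Lemma eqmodZMn n k p q : eqmodZ n p q -> eqmodZ n (p *+ k) (q *+ k).
Proof. by move=> /eqmodZP h; apply/eqmodZP => i hi; rewrite !coefMn h. Qed.

Lemma eqmodZM n p q p' q' : eqmodZ n p q -> eqmodZ n p' q' -> eqmodZ n (p * p') (q * q').
Proof.
move=> /eqmodZP h1 /eqmodZP h2; apply/eqmodZP => i hi; rewrite !coefM.
apply: eq_bigr => j _; have hj : (j <= i)%N by rewrite -ltnS.
by rewrite h1 ?h2 // (leq_ltn_trans _ hi) ?leq_subr.
Qed.

Lemma eqmodZMX n p q : eqmodZ n.+1 (p * 'X) (q * 'X) <-> eqmodZ n p q.
Proof.
rewrite !eqmodZP; split=> h i hi; first by have := h i.+1 hi; rewrite !coefMX.
by rewrite !coefMX; case: i hi => //= i; exact: h.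
Qed.

Lemma eqmodZ_derivY n p q : eqmodZ n p q -> eqmodZ n (derivY p) (derivY q).
Proof. by move=> /eqmodZP h; apply/eqmodZP => i hi; rewrite !coef_derivY h. Qed.

Lemma eqmodZ_iter_derivY n k p q :
  eqmodZ n p q -> eqmodZ n (iter k derivY p) (iter k derivY q).
Proof. by elim: k => [|k IH] //= h; apply: eqmodZ_derivY; apply: IH. Qed.

Lemma eqmodZ_deriv n p q : eqmodZ n.+1 p q -> eqmodZ n p^`() q^`().
Proof. by move=> /eqmodZP h; apply/eqmodZP => i hi; rewrite !coef_deriv h. Qed.

Lemma eqmodZ_compY n X X' f : eqmodZ n X X' -> eqmodZ n (compY X f) (compY X' f).
Proof.
move=> h; elim/poly_ind: f => [|f c IH]; first by rewrite !rmorph0.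
rewrite !rmorphD !rmorphM !compYX !compYC.
by apply: eqmodZD; [exact: eqmodZM | exact: eqmodZ_refl].
Qed.

Lemma eqmodZ_subr0 n p q : eqmodZ n (p - q) 0 -> eqmodZ n p q.
Proof. by rewrite /eqmodZ linearB take_poly0r => /eqP; rewrite subr_eq0 => /eqP. Qed.

Lemma substYC Phi c : substY Phi c%:P = compY Phi c.
Proof. by rewrite /substY /= map_polyC horner_evalE hornerC. Qed.

Lemma substYX Phi : substY Phi 'X = 'X.
Proof. by rewrite /substY /= map_polyX horner_evalE hornerX. Qed.

Lemma substY_Y Phi : substY Phi 'X%:P = Phi.
Proof. by rewrite substYC compYX. Qed.

Lemma substY_compY Phi X f : substY Phi (compY X f) = compY (substY Phi X) f.
Proof.
elim/poly_ind: f => [|f c IH]; first by rewrite !rmorph0.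
by rewrite !rmorphD !rmorphM !compYX !compYC IH substYC compYC.
Qed.

Lemma coef0_substY (Phi g : T) : Phi`_0 = 'X -> (substY Phi g)`_0 = g`_0.
Proof.
move=> Phi0; rewrite -{1}(poly_take_drop 1 g) take_poly1 rmorphD rmorphM rmorphXn.
by rewrite substYX substYC coefD coefMXn /= addr0 coef0_compY Phi0 comp_polyXr.
Qed.

Lemma substY_eqmodZ0 (Phi : T) n (g : T) :
  Phi`_0 = 'X -> eqmodZ n (substY Phi g) 0 -> eqmodZ n g 0.
Proof.
move=> Phi0; elim: n g => [|n IH] g h; first by rewrite /eqmodZ !take_poly0l.
have g0 : g`_0 = 0 by rewrite -(coef0_substY g Phi0); move/eqmodZP: h => ->; rewrite ?coef0.
have eg : g = drop_poly 1 g * 'X.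
  by rewrite -{1}(poly_take_drop 1 g) take_poly1 g0 polyC0 add0r expr1.
move: h; rewrite eg rmorphM substYX -(mul0r 'X) => /eqmodZMX/IH/eqmodZMX.
by rewrite mul0r.
Qed.

End SeriesInY.

Arguments derivY {R}.

Section LagrangeInversion.
Variables (R : comRingType) (W : {poly R}) (I : nat -> {poly R}).
Local Notation T := {poly {poly R}}.
Let Phi : T := 'X%:P + W%:P * 'X.
Hypothesis I_inverse : forall n,
  (\sum_(k < n.+1) compY Phi (I k) * 'X^k)`_n = if n == 0%N then 'X else 0.

Definition partial_inverse m : T := \sum_(i < m.+1) (I i)%:P * 'X^i.

Lemma coef0_Phi : Phi`_0 = 'X.
Proof. by rewrite coefD coefC coefMX /= addr0. Qed.

Lemma coef0_partial_inverse m : (partial_inverse m)`_0 = 'X.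
Proof.
have I0 : I 0 = 'X.
  by have := I_inverse 0; rewrite big_ord1 expr0 mulr1 coef0_compY coef0_Phi comp_polyXr.
rewrite coef_sum big_ord_recl /= expr0 mulr1 coefC /= I0 big1 ?addr0 //.
by move=> i _; rewrite coefMXn.
Qed.

Section Truncation.
Variable m : nat.
Local Notation X := (partial_inverse m).

Lemma substY_partial_inverse : eqmodZ m.+1 (substY Phi X) 'X%:P.
Proof.
apply/eqmodZP => i hi.
rewrite -[RHS](_ : (\sum_(k < i.+1) compY Phi (I k) * 'X^k)`_i = _); last first.
  by rewrite I_inverse coefC.
rewrite rmorph_sum !coef_sum.
rewrite (big_ord_widen m.+1 (fun k => (compY Phi (I k) * 'X^k)`_i) hi) [RHS]big_mkcond.
apply: eq_bigr => k _; rewrite rmorphM rmorphXn substYX substYC.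
by case: ifP => // /negbT; rewrite -leqNgt => hk; rewrite coefMXn hk.
Qed.

Lemma partial_inverse_fixpoint : eqmodZ m.+1 (X + 'X * compY X W) 'X%:P.
Proof.
apply: eqmodZ_subr0; apply: (substY_eqmodZ0 coef0_Phi).
rewrite rmorphB rmorphD rmorphM substYX substY_compY substY_Y.
apply: (eqmodZ_trans (q := 'X%:P + 'X * compY 'X%:P W - Phi)).
  apply: eqmodZB; last exact: eqmodZ_refl.
  apply: eqmodZD; first exact: substY_partial_inverse.
  apply: eqmodZM; first exact: eqmodZ_refl.
  exact/eqmodZ_compY/substY_partial_inverse.
by rewrite compY_Y /Phi [W%:P * _]mulrC subrr.
Qed.

Lemma derivY_partial_inverse :
  eqmodZ m.+1 ((1 + 'X * compY X W^`()) * derivY X) 1.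
Proof.
have := eqmodZ_derivY partial_inverse_fixpoint.
rewrite raddfD derivYM derivYX mul0r add0r derivY_compY derivYC derivX polyC1.
by rewrite mulrDl mul1r mulrA.
Qed.

Lemma deriv_partial_inverse_fixpoint :
  eqmodZ m ((1 + 'X * compY X W^`()) * X^`() + compY X W) 0.
Proof.
have := eqmodZ_deriv partial_inverse_fixpoint.
rewrite derivD derivM derivX deriv_compY derivC.
by rewrite mulrDl !mul1r !mulrA -addrA [compY X W + _]addrC.
Qed.

(* Eliminate 1 + Z W'(X) between the Y- and Z-derivatives of the fixpoint equation. *)
Lemma deriv_partial_inverse : eqmodZ m X^`() (- (compY X W * derivY X)).
Proof.
set A := 1 + 'X * compY X W^`(); set H := compY X W.
have -> : X^`() = (A * X^`() + H) * derivY X - H * derivY X + X^`() * (1 - A * derivY X).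
  by rewrite mulrDl addrK mulrBr mulr1 mulrA [X^`() * A]mulrC addrC subrK.
apply: (eqmodZ_trans (q := 0 * derivY X - H * derivY X + X^`() * (1 - 1))); last first.
  by rewrite mul0r subrr mulr0 addr0 add0r.
apply: eqmodZD.
  apply: eqmodZB _ (eqmodZ_refl _ _); apply: eqmodZM _ (eqmodZ_refl _ _).
  exact: deriv_partial_inverse_fixpoint.
apply: eqmodZM (eqmodZ_refl _ _) (eqmodZB (eqmodZ_refl _ _) _).
exact: eqmodZ_leq (leqnSn m) derivY_partial_inverse.
Qed.

Lemma deriv_compY_partial_inverse f :
  eqmodZ m (compY X f)^`() (compY X (- W) * derivY (compY X f)).
Proof.
rewrite deriv_compY derivY_compY rmorphN.
apply: eqmodZ_trans (eqmodZM (eqmodZ_refl m (compY X f^`())) deriv_partial_inverse) _.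
by rewrite mulrN mulNr mulrCA.
Qed.

Lemma derivn_compY_partial_inverse f k : (k < m)%N ->
  eqmodZ (m - k) ((compY X f)^`(k.+1))
    (iter k derivY (compY X (- W) ^+ k.+1 * derivY (compY X f))).
Proof.
set G := compY X f; set H := compY X (- W).
have eH : eqmodZ m H^`() (H * derivY H) := deriv_compY_partial_inverse (- W).
have eG : eqmodZ m G^`() (H * derivY G) := deriv_compY_partial_inverse f.
elim: k => [|k IH] hk; first by rewrite subn0 derivn1 expr1.
have le_mk : (m - k.+1 <= m)%N by apply: leq_subr.
have := IH (ltnW hk); rewrite -(subnSK (ltnW hk)) => /eqmodZ_deriv.
rewrite -derivnS deriv_iter_derivY => h; apply: eqmodZ_trans h _.
rewrite iterSr; apply: eqmodZ_iter_derivY.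
rewrite derivM deriv_exp succnK deriv_derivY derivYM derivY_exp.
apply: (eqmodZ_trans (q :=
  ((H * derivY H) * H ^+ k *+ k.+1 * derivY G + H ^+ k.+1 * derivY (H * derivY G)))).
  apply: eqmodZD.
    apply: eqmodZM _ (eqmodZ_refl _ _); apply: eqmodZMn; apply: eqmodZM _ (eqmodZ_refl _ _).
    exact: eqmodZ_leq le_mk eH.
  by apply: eqmodZM (eqmodZ_refl _ _) _; apply: eqmodZ_derivY; exact: eqmodZ_leq le_mk eG.
by rewrite derivYM !exprS; congr (take_poly _ _); ring.
Qed.

End Truncation.

Lemma lagrange_inversion m f : (0 < m)%N ->
  (compY (partial_inverse m) f)`_m *+ m`! = ((- W) ^+ m * f^`())^`(m.-1).
Proof.
move=> m_gt0; have := @derivn_compY_partial_inverse m f m.-1.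
have m_pred : (0 < m - m.-1)%N by rewrite subn_gt0 ltn_predL.
rewrite prednK // => /(_ (ltnSn _)) /eqmodZP /(_ 0%N m_pred).
rewrite coef_derivn addn0 ffactnn coef0_iter_derivY coef0M -!/(coefp 0 _) rmorphXn /=.
by rewrite coef_derivY !coef0_compY coef0_partial_inverse !comp_polyXr.
Qed.

Lemma lagrange_inversion_pow U b m : W = U ^+ b ->
  (((-1) ^+ m * (m`!)%:R) *: (compY (partial_inverse m) U)`_m) *+ (b * m + 1)
    = (U ^+ (b * m + 1))^`(m).
Proof.
move=> hW; case: m => [|m].
  by rewrite coef0_compY coef0_partial_inverse comp_polyXr expr0 mul1r scale1r muln0 expr1.
rewrite -scalerA scaler_nat lagrange_inversion // [(- W) ^+ _]exprNn hW [m.+1.-1]/=.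
rewrite -mulrA -[(-1 : {poly R}) ^+ m.+1]signr_odd -[(-1 : R) ^+ m.+1]signr_odd.
rewrite mulr_sign scaler_sign derivSn deriv_exp addn1 [(_.+1).-1]/= exprM derivnMn.
by case: (odd m.+1); rewrite ?derivnN ?opprK mulrC.
Qed.

End LagrangeInversion.

Section VarsAbove.
Variables (R : comRingType) (n : nat).

Definition vars_above t (p : {mpoly R[n]}) :=
  forall mon, mon \in msupp p -> forall i : 'I_n, (i <= t)%N -> mon i = 0%N.

Lemma vars_aboveD t p q : vars_above t p -> vars_above t q -> vars_above t (p + q).
Proof.
by move=> hp hq mon /msuppD_le; rewrite mem_cat => /orP [] h; [exact: hp | exact: hq].
Qed.

Lemma vars_aboveM t p q : vars_above t p -> vars_above t q -> vars_above t (p * q).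
Proof.
move=> hp hq mon /msuppM_le /allpairsP [[m1 m2] /= [h1 h2 ->]] i hi.
by rewrite mnmDE (hp _ h1) ?(hq _ h2).
Qed.

Lemma vars_aboveC t c : vars_above t c%:MP.
Proof.
move=> mon; rewrite msuppC; case: eqP => _; first by rewrite in_nil.
by rewrite mem_seq1 => /eqP -> i _; rewrite mnm0E.
Qed.

Lemma vars_above0 t : vars_above t 0.
Proof. by rewrite -mpolyC0; apply: vars_aboveC. Qed.

Lemma vars_aboveMn t p k : vars_above t p -> vars_above t (p *+ k).
Proof.
by move=> hp; rewrite -mulr_natr -mpolyC_nat; apply: vars_aboveM => //; apply: vars_aboveC.
Qed.

Lemma vars_aboveXn t p k : vars_above t p -> vars_above t (p ^+ k).
Proof.
move=> hp; elim: k => [|k IH]; first by rewrite expr0 -mpolyC1; apply: vars_aboveC.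
by rewrite exprS; apply: vars_aboveM.
Qed.

Lemma vars_aboveX t (i : 'I_n) : (t < i)%N -> vars_above t 'X_i.
Proof.
move=> lt_ti mon; rewrite msuppX mem_seq1 => /eqP -> j le_jt.
by rewrite mnm1E; case: eqP => // eij; move: lt_ti; rewrite eij ltnNge le_jt.
Qed.

Lemma vars_above_leq t t' p : (t' <= t)%N -> vars_above t p -> vars_above t' p.
Proof. by move=> le_t't hp mon hm i hi; apply: hp => //; apply: leq_trans le_t't. Qed.

End VarsAbove.

Section GenericPowers.
Variables (R : idomainType) (a : nat).
Local Notation Pol := {mpoly R[a.+1]}.

Definition uvar j : Pol := 'X_(inord j).
Definition Upol : {poly Pol} := \poly_(j < a.+1) uvar j.

Lemma vars_above_uvar t j : (t < j <= a)%N -> vars_above t (uvar j).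
Proof. by move=> /andP [lt_tj le_ja]; apply: vars_aboveX; rewrite inordK. Qed.

Lemma uvar_neq0 j : uvar j != 0.
Proof. by rewrite -msupp_eq0 msuppX. Qed.

Lemma coef_Upol j : Upol`_j = if (j <= a)%N then uvar j else 0.
Proof. by rewrite coef_poly. Qed.

Lemma size_Upol : size Upol = a.+1.
Proof. by rewrite size_poly_eq // uvar_neq0. Qed.

Lemma size_UpolXn N : size (Upol ^+ N) = (a * N).+1.
Proof.
have Upol_neq0 : Upol != 0 by rewrite -size_poly_eq0 size_Upol.
have := size_exp Upol N; rewrite size_Upol /= => <-.
by rewrite prednK // lt0n size_poly_eq0 expf_neq0.
Qed.

Lemma coef_UpolXn_lead N : (Upol ^+ N)`_(a * N) = uvar a ^+ N.
Proof.
have := lead_coef_exp Upol N; rewrite !lead_coefE size_UpolXn size_Upol /=.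
by move=> ->; rewrite coef_Upol leqnn.
Qed.

Lemma coef_UpolXn_gt N j : (a * N < j)%N -> (Upol ^+ N)`_j = 0.
Proof. by move=> lt_j; rewrite nth_default // size_UpolXn. Qed.

Lemma coef_mulUpol (P : {poly Pol}) i : (a <= i)%N ->
  (P * Upol)`_i = \sum_(j < a.+1) uvar j * P`_(i - j).
Proof.
move=> le_ai; rewrite /Upol poly_def mulr_sumr coef_sum; apply: eq_bigr => j _.
by rewrite -scalerAr coefZ coefMXn ltnNge (leq_trans _ le_ai) // -ltnS.
Qed.

Lemma vars_above_coef_UpolXn_lt N k k' :
  (forall k, (0 < k <= a)%N -> vars_above (a - k)
     ((Upol ^+ N)`_(a * N - k) - N%:R * uvar a ^+ N.-1 * uvar (a - k))) ->
  (k' < k <= a)%N -> vars_above (a - k) ((Upol ^+ N)`_(a * N - k')).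
Proof.
move=> top_N /andP [lt_k'k le_ka]; have [->|k'_gt0] := posnP k'.
  by rewrite subn0 coef_UpolXn_lead; apply/vars_aboveXn/vars_above_uvar; lia.
rewrite -[X in vars_above _ X](subrK (N%:R * uvar a ^+ N.-1 * uvar (a - k'))).
apply: vars_aboveD; first by apply: vars_above_leq (top_N k' _); lia.
apply: vars_aboveM; last by apply: vars_above_uvar; lia.
apply: vars_aboveM; first by rewrite -mpolyC_nat; apply: vars_aboveC.
by apply/vars_aboveXn/vars_above_uvar; lia.
Qed.

Lemma vars_above_coef_UpolXn N k : (0 < N)%N -> (0 < k <= a)%N ->
  vars_above (a - k) ((Upol ^+ N)`_(a * N - k) - N%:R * uvar a ^+ N.-1 * uvar (a - k)).
Proof.
elim: N k => [//|N IH] k _ /andP [k_gt0 le_ka].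
case: N IH => [|N] IH.
  by rewrite expr1 coef_Upol muln1 leq_subr expr0 mulr1 mul1r subrr; apply: vars_above0.
have le_aN : (a <= a * N.+2 - k)%N by rewrite !mulnS; lia.
have lt_ka : (a - k < a.+1)%N by rewrite ltnS leq_subr.
have neq_ka : (inord (a - k) : 'I_a.+1) != ord_max.
  by apply/eqP => /(congr1 val); rewrite /= inordK //; lia.
rewrite exprSr coef_mulUpol // (bigD1 ord_max) //= (bigD1 (inord (a - k))) //= inordK //.
have -> : (a * N.+2 - k - a = a * N.+1 - k)%N by rewrite !mulnS; lia.
have -> : (a * N.+2 - k - (a - k) = a * N.+1)%N by rewrite !mulnS; lia.
rewrite coef_UpolXn_lead.
have := IH k isT; rewrite k_gt0 le_ka => /(_ isT) /=.
set Q := _ - _ => hQ.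
set S := \sum_(j < a.+1 | _) _.
have -> : uvar a * (Upol ^+ N.+1)`_(a * N.+1 - k) + (uvar (a - k) * uvar a ^+ N.+1 + S)
    - N.+2%:R * uvar a ^+ N.+2.-1 * uvar (a - k) = uvar a * Q + S.
  rewrite /Q /= [uvar a ^+ N.+1]exprS; move: (uvar a ^+ N) => V; ring.
apply: vars_aboveD.
  by apply: vars_aboveM hQ; apply: vars_above_uvar; lia.
apply: big_ind; [exact: vars_above0 | exact: vars_aboveD |] => j /andP [ne_ja ne_jk].
have lt_ja : (j < a)%N.
  by rewrite ltn_neqAle -ltnS ltn_ord andbT; apply: contra ne_ja => /eqP ej; apply/eqP/val_inj.
have ne_jk' : (nat_of_ord j != (a - k)%N).
  by apply: contra ne_jk => /eqP ej; apply/eqP/val_inj; rewrite /= inordK.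
have [lt_jk|le_kj] := ltnP j (a - k).
  by rewrite coef_UpolXn_gt ?mulr0; [exact: vars_above0 | rewrite !mulnS; lia].
apply: vars_aboveM; first by apply: vars_above_uvar; lia.
rewrite (_ : a * N.+2 - k - j = a * N.+1 - (j + k - a))%N; last by rewrite !mulnS; lia.
by apply: vars_above_coef_UpolXn_lt; [move=> k' hk'; exact: IH | lia].
Qed.

Lemma coef_UpolXn_top N k : (0 < N)%N -> (k <= a)%N ->
  exists2 c : nat, (0 < c)%N & exists Q : Pol,
    [/\ vars_above (a - k) Q, k = 0%N -> Q = 0
      & (Upol ^+ N)`_(a * N - k) = c%:R * uvar a ^+ N.-1 * uvar (a - k) + Q].
Proof.
move=> N_gt0 le_ka; have [->|k_gt0] := posnP k.
  exists 1%N => //; exists 0; split=> //; first exact: vars_above0.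
  by rewrite !subn0 coef_UpolXn_lead mul1r addr0 -exprSr prednK.
exists N => //; exists ((Upol ^+ N)`_(a * N - k) - N%:R * uvar a ^+ N.-1 * uvar (a - k)).
split; last by rewrite addrC subrK.
- by apply: vars_above_coef_UpolXn; rewrite ?k_gt0.
- by move=> k0; move: k_gt0; rewrite k0.
Qed.

End GenericPowers.

Section Triangularity.
Variables (Rr : realType) (a : nat).
Local Notation Pol := (Pol Rr a).
Local Notation K := (K Rr a).
Local Notation Upol := (Upol (Cc Rr) a).
Local Notation uvar := (uvar (Cc Rr) a).

Lemma Upoly_tofrac : Upoly Rr a = map_poly (@tofrac Pol) Upol.
Proof.
apply/polyP => j; rewrite coef_map coef_poly coef_Upol ltnS.
by case: ifP => _ //; rewrite tofrac0.
Qed.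

Lemma natr_Pol_neq0 n : (0 < n)%N -> (n%:R : Pol) != 0.
Proof. by move=> n_gt0; rewrite -mpolyC_nat mpolyC_eq0 pnatr_eq0 -lt0n. Qed.

Lemma ratr_tofrac (q : rat) : ratr q = tofrac ((ratr q : Cc Rr)%:MP) :> K.
Proof. by rewrite -[RHS]/((@tofrac Pol \o @mpolyC _ _) (ratr q)) fmorph_rat. Qed.

Lemma derivn_UpolXn_tofrac N m (P : {poly K}) : (0 < N)%N ->
  P *+ N = (Upoly Rr a ^+ N)^`(m) ->
  P = map_poly (@tofrac Pol) (((N%:R : Cc Rr)^-1)%:MP *: (Upol ^+ N)^`(m)).
Proof.
move=> N_gt0 eP; have NK : (N%:R : K) != 0.
  by rewrite -(rmorph_nat (@tofrac Pol)) tofrac_eq0 natr_Pol_neq0.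
apply: (scalerI NK); rewrite !scaler_nat eP Upoly_tofrac -rmorphXn derivn_map -rmorphMn.
congr (map_poly _ _); rewrite scalerMnl -mulr_natr -mpolyC_nat -mpolyCM mulVf ?mpolyC1 ?scale1r //.
by rewrite pnatr_eq0 -lt0n.
Qed.

Lemma triangular_derivn_UpolXn N m : (0 < N)%N -> (a + m <= a * N)%N ->
  triangular N (a * N - m)
    (map_poly (@tofrac Pol) (((N%:R : Cc Rr)^-1)%:MP *: (Upol ^+ N)^`(m))).
Proof.
move=> N_gt0 le_amN; set d := (a * N - m)%N; set cN : Pol := _%:MP.
have cN_neq0 : cN != 0 by rewrite mpolyC_eq0 invr_eq0 pnatr_eq0 -lt0n.
have coefP l : (map_poly (@tofrac Pol) (cN *: (Upol ^+ N)^`(m)))`_l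
    = tofrac (cN * ((Upol ^+ N)`_(m + l) *+ (m + l) ^_ m)).
  by rewrite coef_map coefZ coef_derivn.
split; [|split; [|split]].
- by move=> i; exists 0%N, (cN * ((Upol ^+ N)`_(m + i) *+ (m + i) ^_ m)); rewrite coefP expr0 divr1.
- rewrite size_map_inj_poly ?tofrac0 //; last by move=> x y /eqP; rewrite tofrac_eq => /eqP.
  rewrite size_scale //; apply/eqP; rewrite eqn_leq; apply/andP; split.
    by apply/leq_sizeP => j lt_dj; rewrite coef_derivn coef_UpolXn_gt ?mul0rn //; lia.
  rewrite ltnNge; apply/negP => /leq_sizeP /(_ d (leqnn d)) /eqP; apply/negP.
  rewrite coef_derivn (_ : m + d = a * N)%N; last by lia.
  rewrite coef_UpolXn_lead -mulr_natl mulf_neq0 ?expf_neq0 ?uvar_neq0 //.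
  by rewrite natr_Pol_neq0 // ffact_gt0; lia.
- by rewrite /d; lia.
move=> l /andP [le_l1 le_l2]; set k := (d - l)%N.
have le_ka : (k <= a)%N by lia.
have [c c_gt0 [Q [hQ Q0 eQ]]] := coef_UpolXn_top (Cc Rr) N_gt0 le_ka.
set ff := ((m + l) ^_ m)%N; have ff_gt0 : (0 < ff)%N by rewrite ffact_gt0; lia.
exists ((c * ff)%:R / N%:R); split.
  by rewrite divr_gt0 ?ltr0n ?muln_gt0 ?c_gt0.
exists (cN * (Q *+ ff)); split; [|split].
- by apply: vars_aboveM; [exact: vars_aboveC | exact: vars_aboveMn].
- by move=> eld; rewrite Q0 ?mul0rn ?mulr0 // /k eld subnn.
rewrite coefP -/ff (_ : m + l = a * N - k)%N; last by lia.
rewrite eQ mulrnDl mulrDr tofracD; congr (_ + _).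
rewrite ratr_tofrac /u -tofracXn -!tofracM; congr tofrac.
have -> : ratr ((c * ff)%:R / N%:R) = (c * ff)%:R / N%:R :> Cc Rr.
  by rewrite fmorph_div !rmorph_nat.
rewrite mpolyCM -/cN mpolyC_nat natrM /uvar.
by move: ('X_(inord a) ^+ N.-1) => x; ring.
Qed.

End Triangularity.

Unset Implicit Arguments.

Theorem mainTheorem9 (Rr : realType) (a b : nat) (ha : (2 <= a)%N) (hb : (2 <= b)%N)
  (I : nat -> {poly K Rr a})
  (hIR : forall k i, inR ((I k)`_i))
  (hI : is_formal_inverse b I) :
  forall m : nat,
    triangular (b * m + 1) ((a * b - 1) * m + a)
      (((-1) ^+ m * (m`!)%:R) *: vcoef I m).
Proof.
move=> m; set N := (b * m + 1)%N.
have N_gt0 : (0 < N)%N by rewrite /N addn1.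
have ab_gt0 : (0 < a * b)%N by rewrite muln_gt0; lia.
have inverse : forall n, (\sum_(k < n.+1) compY ('X%:P + (Upoly Rr a ^+ b)%:P * 'X) (I k) * 'X^k)`_n
    = if n == 0%N then 'X else 0.
  by move=> n; rewrite -(hI n); under eq_bigr do rewrite compYE.
have := lagrange_inversion_pow inverse m erefl.
have -> : (compY (partial_inverse I m) (Upoly Rr a))`_m = vcoef I m by rewrite compYE.
move=> /(derivn_UpolXn_tofrac N_gt0) ->.
have -> : ((a * b - 1) * m + a = a * N - m)%N by rewrite /N; nia.
apply: triangular_derivn_UpolXn N_gt0 _.
by rewrite /N mulnDr muln1 mulnA addnC leq_add2r leq_pmull.
Qed.
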